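(* Let $\mathcal{A}$ be the augmented free tridendriform algebra on reduced planar trees, and let $\Delta:\mathcal{A}\to\mathcal{A}\otimes\mathcal{A}$ be the map such that $\Delta(|)=|\otimes|$ and whose restriction to $\mathcal{A}^+$ is the unique tridendriform algebra morphism $\mathcal{A}^+\to\mathcal{A}\overline{\otimes}\mathcal{A}$ with $\Delta(Y)=Y\otimes|+|\otimes Y$. For $x\in\mathcal A^+$ put $\tilde\Delta(x)=\Delta(x)-|\otimes x-x\otimes|$. Then for all $t,s\in\mathcal{A}^+$: $$\tilde\Delta(t\cdot s)=\tilde\Delta(t)\cdot\tilde\Delta(s)+(|\otimes t)\cdot\tilde\Delta(s)+\tilde\Delta(t)\cdot(|\otimes s),$$ $$\tilde\Delta(t\prec s)=s\otimes t+(|\otimes t)\prec\tilde\Delta(s)+\tilde\Delta(t)\prec(|\otimes s)+\tilde\Delta(t)*(s\otimes|)+\tilde\Delta(t)\prec\tilde\Delta(s),$$ $$\tilde\Delta(t\succ s)=t\otimes s+(|\otimes t)\succ\tilde\Delta(s)+(t\otimes|)*\tilde\Delta(s)+\tilde\Delta(t)\succ(|\otimes s)+\tilde\Delta(t)\succ\tilde\Delta(s),$$ where the products $\prec,\cdot,\succ$ of tensors are those of $\mathcal{A}\overline{\otimes}\mathcal{A}$ and $(a\otimes b)*(c\otimes d)=(a*c)\otimes(b*d)$.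
   Context: A tridendriform algebra over a field $\mathbb{K}$ is a vector space with products $\prec,\cdot,\succ$ such that, with $a*b=a\prec b+a\cdot b+a\succ b$: $(a\prec b)\prec c=a\prec(b*c)$, $(a\succ b)\prec c=a\succ(b\prec c)$, $(a*b)\succ c=a\succ(b\succ c)$, $(a\succ b)\cdot c=a\succ(b\cdot c)$, $(a\prec b)\cdot c=a\cdot(b\succ c)$, $(a\cdot b)\prec c=a\cdot(b\prec c)$, $(a\cdot b)\cdot c=a\cdot(b\cdot c)$. Trees: planar rooted trees in which every internal vertex has at least two children; the root vertex hangs from a trunk edge; leaves are the edges without upper vertex. $|$ is the tree with no internal vertex (one leaf). $T_n$ is the set of such trees with $n+1$ leaves, $\mathcal{A}=\bigoplus_{n\ge0}\mathbb{K}T_n$, $\mathcal{A}^+=\bigoplus_{n\ge1}\mathbb{K}T_n$. For trees $x_0,\dots,x_k$ ($k\ge1$), $x_0\vee\cdots\vee x_k$ is obtained by grafting them from left to right on a new root vertex; every tree $x\neq|$ is uniquely $x=x^{(0)}\vee\cdots\vee x^{(k)}$. $Y=|\vee|$. For trees $x=x^{(0)}\vee\cdots\vee x^{(k)}$, $y=y^{(0)}\vee\cdots\vee y^{(l)}$ in $\mathcal A^+$, recursively on the number of leaves: $x\prec y=x^{(0)}\vee\cdots\vee x^{(k-1)}\vee(x^{(k)}*y)$, $x\cdot y=x^{(0)}\vee\cdots\vee x^{(k-1)}\vee(x^{(k)}*y^{(0)})\vee y^{(1)}\vee\cdots\vee y^{(l)}$, $x\succ y=(x*y^{(0)})\vee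 y^{(1)}\vee\cdots\vee y^{(l)}$, where $*=\prec+\cdot+\succ$ and $|*z=z*|=z$. Then $\mathcal{A}^+$ is the free tridendriform algebra generated by $Y$ (Loday–Ronco), and $\mathcal A=\mathbb K|\oplus\mathcal A^+$ is its augmentation: $|$ is the unit of $*$ and for $a\in\mathcal A^+$: $|\prec a=0$, $a\prec|=a$, $|\succ a=a$, $a\succ|=0$, $|\cdot a=a\cdot|=0$. $\mathcal A\overline{\otimes}\mathcal A:=(\mathcal A^+\otimes\mathcal A^+)\oplus(\mathbb K|\otimes\mathcal A^+)\oplus(\mathcal A^+\otimes\mathbb K|)$, with products for $\ltimes\in\{\prec,\cdot,\succ\}$: $(a\otimes|)\ltimes(c\otimes|)=(a\ltimes c)\otimes|$ for $a,c\in\mathcal A^+$, and $(a\otimes b)\ltimes(c\otimes d)=(a*c)\otimes(b\ltimes d)$ when $b,d$ are not both $|$ (augmented conventions); it is a tridendriform algebra. *)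

(* Planar reduced trees, the free tridendriform algebra on them,
   and the tensor square A (x)bar A, modelled concretely:
   an element of K T (T = trees, or pairs of trees) is represented by a finite
   list of (coefficient, basis element); two representations denote the same
   vector iff all coefficients agree ([veq]). *)
From HB Require Import structures.
From mathcomp Require Import all_boot all_algebra.
Set Implicit Arguments. Unset Strict Implicit. Unset Printing Implicit Defensive.
Import GRing.Theory.
Local Open Scope ring_scope.

(* Planar rooted trees: a vertex with its ordered list of children.
   [Node [::]] is the tree | (no internal vertex); [Node [:: x0; ..; xk]] is
   x0 \/ ... \/ xk. *)
Inductive tree := Node of seq tree.

Definition leaf : tree := Node [::].
Definition Ytree : tree := Node [:: leaf; leaf].

Definition is_leaf (x : tree) : bool := if x is Node [::] then true else false.

Fixpoint tree_eqb (x y : tree) {struct x} : bool :=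
  let: Node xs := x in let: Node ys := y in
  (fix aux (xs ys : seq tree) {struct xs} : bool :=
     match xs, ys with
     | [::], [::] => true
     | x1 :: xs1, y1 :: ys1 => tree_eqb x1 y1 && aux xs1 ys1
     | _, _ => false
     end) xs ys.

Lemma tree_eqP : Equality.axiom tree_eqb.
Proof.
rewrite /Equality.axiom.
fix IH 1 => -[xs] [ys] /=.
elim: xs ys => [|x xs IHs] [|y ys] /=; try by constructor.
case: (IH x y) => [<-|nxy]; last by constructor => -[].
case: (IHs ys) => [[<-]|nxs]; first by constructor.
by constructor => -[E]; apply: nxs; rewrite E.
Qed.

HB.instance Definition _ := hasDecEq.Build tree tree_eqP.

Fixpoint valid (x : tree) : bool :=
  let: Node cs := x in (size cs != 1%N) && all valid cs.

Fixpoint tsize (x : tree) : nat :=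
  let: Node cs := x in (sumn (map tsize cs)).+1.

Section Alg.
Variable K : fieldType.

Definition lin (T : Type) := seq (K * T).

Definition coef (T : eqType) (v : lin T) (u : T) : K :=
  \sum_(p <- v | p.2 == u) p.1.
Definition veq (T : eqType) (v w : lin T) : Prop := forall u, coef v u = coef w u.

Definition lscale (T : Type) (c : K) (v : lin T) : lin T :=
  [seq (c * p.1, p.2) | p <- v].
Definition lsub (T : Type) (v w : lin T) : lin T := v ++ lscale (-1) w.

Definition bilin (A B C : Type) (f : A -> B -> lin C) (v : lin A) (w : lin B) : lin C :=
  flatten [seq lscale (p.1 * q.1) (f p.2 q.2) | p <- v, q <- w].

Definition tens (v w : lin tree) : lin (tree * tree) :=
  [seq (p.1 * q.1, (p.2, q.2)) | p <- v, q <- w].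

Definition graft (L : seq tree) (v : lin tree) (R : seq tree) : lin tree :=
  [seq (p.1, Node (L ++ p.2 :: R)) | p <- v].

(* (x prec y, x . y, x succ y) for x, y <> |, defined recursively (fuel n
   bounding the recursion depth); the star products of subtrees use the
   unit convention | * z = z * | = z. *)
Fixpoint tri (n : nat) (x y : tree) {struct n} : lin tree * lin tree * lin tree :=
  match n with
  | 0%N => ([::], [::], [::])
  | n'.+1 =>
    let st (a b : tree) : lin tree :=
      if is_leaf a then [:: (1, b)] else if is_leaf b then [:: (1, a)] else
      let: (p, q, r) := tri n' a b in p ++ q ++ r in
    match x, y with
    | Node (x0 :: xs), Node (y0 :: ys) =>
      let xl := belast x0 xs in
      let xk := last x0 xs in
      (graft xl (st xk y) [::], graft xl (st xk y0) ys, graft [::] (st x y0) ys)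
    | _, _ => ([::], [::], [::])
    end
  end.

(* the products on basis trees of A^+ (fuel = total size, which suffices) *)
Definition tprec (x y : tree) : lin tree := (tri (tsize x + tsize y) x y).1.1.
Definition tdot (x y : tree) : lin tree := (tri (tsize x + tsize y) x y).1.2.
Definition tsucc (x y : tree) : lin tree := (tri (tsize x + tsize y) x y).2.

(* augmented products on A (the value on (|,|) is irrelevant and set to 0) *)
Definition tstar (x y : tree) : lin tree :=
  if is_leaf x then [:: (1, y)] else if is_leaf y then [:: (1, x)]
  else tprec x y ++ tdot x y ++ tsucc x y.
Definition aprec (x y : tree) : lin tree :=
  if is_leaf y then (if is_leaf x then [::] else [:: (1, x)])
  else if is_leaf x then [::] else tprec x y.
Definition adot (x y : tree) : lin tree :=
  if is_leaf x || is_leaf y then [::] else tdot x y.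
Definition asucc (x y : tree) : lin tree :=
  if is_leaf x then (if is_leaf y then [::] else [:: (1, y)])
  else if is_leaf y then [::] else tsucc x y.

Definition vprec := bilin tprec.
Definition vdot := bilin tdot.
Definition vsucc := bilin tsucc.

(* products of A (x)bar A on basis tensors a(x)b, c(x)d, for op in {prec,.,succ}:
   (a(x)|) op (c(x)|) = (a op c)(x)| ;  otherwise (a*c)(x)(b op d). *)
Definition tens_op (op : tree -> tree -> lin tree) (u v : tree * tree)
  : lin (tree * tree) :=
  if is_leaf u.2 && is_leaf v.2 then [seq (p.1, (p.2, leaf)) | p <- op u.1 v.1]
  else tens (tstar u.1 v.1) (op u.2 v.2).

Definition TTprec := bilin (tens_op aprec).
Definition TTdot := bilin (tens_op adot).
Definition TTsucc := bilin (tens_op asucc).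
Definition TTstar := bilin (fun u v : tree * tree => tens (tstar u.1 v.1) (tstar u.2 v.2)).

Definition inAplus (v : lin tree) : bool := all (fun p => valid p.2 && ~~ is_leaf p.2) v.

Definition Dext (D : tree -> lin (tree * tree)) (v : lin tree) : lin (tree * tree) :=
  flatten [seq lscale p.1 (D p.2) | p <- v].

Definition is_Delta (D : tree -> lin (tree * tree)) : Prop :=
  [/\ veq (D leaf) [:: (1, (leaf, leaf))],
      veq (D Ytree) [:: (1, (Ytree, leaf)); (1, (leaf, Ytree))],
      (forall t, valid t -> ~~ is_leaf t -> forall a b, coef (D t) (a, b) != 0 ->
          [&& valid a, valid b & ~~ (is_leaf a && is_leaf b)]) &
      (forall v w, inAplus v -> inAplus w ->
          [/\ veq (Dext D (vprec v w)) (TTprec (Dext D v) (Dext D w)),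
              veq (Dext D (vdot v w)) (TTdot (Dext D v) (Dext D w)) &
              veq (Dext D (vsucc v w)) (TTsucc (Dext D v) (Dext D w))])].

Definition lone (v : lin tree) : lin (tree * tree) := [seq (p.1, (leaf, p.2)) | p <- v].
Definition rone (v : lin tree) : lin (tree * tree) := [seq (p.1, (p.2, leaf)) | p <- v].

Definition Dtilde (D : tree -> lin (tree * tree)) (v : lin tree) : lin (tree * tree) :=
  lsub (lsub (Dext D v) (lone v)) (rone v).

End Alg.

From Pilot Require Import Defs.
From mathcomp Require Import all_boot all_algebra.
From mathcomp Require Import zify ring.
Set Implicit Arguments. Unset Strict Implicit. Unset Printing Implicit Defensive.
Import GRing.Theory.
Local Open Scope ring_scope.

(* The key fact is that Δ~ takes values in
   A^+ ⊗ A^+: for a tree x ≠ |, the terms of Δ(x) with a factor | are exactly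
   | ⊗ x and x ⊗ |. This holds for Y and is inherited by products, since every
   other tree is a product of two smaller ones, and in A ⊗bar A a product of
   two tensors has a factor | only when the corresponding factors of both
   operands are |.
   Then Δ(t ⋆ s) = Δ(t) ⋆ Δ(s), for ⋆ among ≺, ·, ≻, expands into nine terms.
   (| ⊗ t) ⋆ (| ⊗ s) and (t ⊗ |) ⋆ (s ⊗ |) give back | ⊗ (t ⋆ s) and
   (t ⋆ s) ⊗ |; the remaining mixed terms are evaluated by the augmentation
   rules, e.g. (| ⊗ t) ≺ (s ⊗ |) = s ⊗ t, whereas (t ⊗ |) ≺ Δ~(s) = 0 because
   | ≺ b = 0. *)

Section Pairing.
Variables (K : fieldType) (T : Type).
Implicit Types (F G : T -> K) (v w : lin K T).

Definition pairing F v : K := \sum_(p <- v) p.1 * F p.2.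

Lemma pairing_nil F : pairing F [::] = 0.
Proof. by rewrite /pairing big_nil. Qed.

Lemma pairing_cons F p v : pairing F (p :: v) = p.1 * F p.2 + pairing F v.
Proof. by rewrite /pairing big_cons. Qed.

Lemma pairing1 F x : pairing F [:: (1, x)] = F x.
Proof. by rewrite /pairing big_seq1 mul1r. Qed.

Lemma pairing_cat F v w : pairing F (v ++ w) = pairing F v + pairing F w.
Proof. by rewrite /pairing big_cat. Qed.

Lemma pairing_flatten F (s : seq (lin K T)) :
  pairing F (flatten s) = \sum_(v <- s) pairing F v.
Proof. by rewrite /pairing big_flatten. Qed.

Lemma pairing_lscale F c v : pairing F (lscale c v) = c * pairing F v.
Proof. by rewrite /pairing big_map mulr_sumr; apply: eq_bigr => p _; rewrite mulrA. Qed.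

Lemma pairing_lsub F v w : pairing F (lsub v w) = pairing F v - pairing F w.
Proof. by rewrite /lsub pairing_cat pairing_lscale mulN1r. Qed.

Lemma pairingD F G v : pairing (fun x => F x + G x) v = pairing F v + pairing G v.
Proof. by rewrite /pairing -big_split; apply: eq_bigr => p _; rewrite mulrDr. Qed.

Lemma pairingB F G v : pairing (fun x => F x - G x) v = pairing F v - pairing G v.
Proof. by rewrite /pairing -sumrB; apply: eq_bigr => p _; rewrite mulrBr. Qed.

Lemma pairing0 v : pairing (fun _ => 0) v = 0.
Proof. by rewrite /pairing big1 // => p _; rewrite mulr0. Qed.

Lemma eq_pairing F G v : F =1 G -> pairing F v = pairing G v.
Proof. by move=> FG; apply: eq_bigr => p _; rewrite FG. Qed.

Lemma eq_in_pairing (P : pred T) F G v :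
  all (fun p => P p.2) v -> (forall x, P x -> F x = G x) -> pairing F v = pairing G v.
Proof.
move=> + FG; elim: v => [|p v IH] /=; first by rewrite !pairing_nil.
by case/andP=> /FG Fp /IH; rewrite !pairing_cons Fp => ->.
Qed.

End Pairing.

Section PairingMaps.
Variable K : fieldType.

Lemma pairing_map (T U : Type) (F : U -> K) (f : T -> U) (v : lin K T) :
  pairing F [seq (p.1, f p.2) | p <- v] = pairing (fun x => F (f x)) v.
Proof. by rewrite /pairing big_map. Qed.

Lemma pairing_bilin (A B T : Type) (f : A -> B -> lin K T) (F : T -> K)
    (v : lin K A) (w : lin K B) :
  pairing F (bilin f v w) = pairing (fun a => pairing (fun b => pairing F (f a b)) w) v.
Proof.
rewrite /bilin pairing_flatten big_allpairs_dep; apply: eq_bigr => p _.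
by rewrite mulr_sumr; apply: eq_bigr => q _; rewrite pairing_lscale mulrA.
Qed.

Lemma pairing_bilin_catl (A B T : Type) (f : A -> B -> lin K T) (F : T -> K)
    (v1 v2 : lin K A) (w : lin K B) :
  pairing F (bilin f (v1 ++ v2) w) = pairing F (bilin f v1 w) + pairing F (bilin f v2 w).
Proof. by rewrite !pairing_bilin pairing_cat. Qed.

Lemma pairing_bilin_catr (A B T : Type) (f : A -> B -> lin K T) (F : T -> K)
    (v : lin K A) (w1 w2 : lin K B) :
  pairing F (bilin f v (w1 ++ w2)) = pairing F (bilin f v w1) + pairing F (bilin f v w2).
Proof. by rewrite !pairing_bilin -pairingD; apply: eq_pairing => a; rewrite pairing_cat. Qed.

Lemma pairing_swap (A B : Type) (F : A -> B -> K) (v : lin K A) (w : lin K B) :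
  pairing (fun a => pairing (F a) w) v = pairing (fun b => pairing (F^~ b) v) w.
Proof.
rewrite /pairing; under eq_bigr do rewrite mulr_sumr.
rewrite exchange_big /=; apply: eq_bigr => q _; rewrite mulr_sumr.
by apply: eq_bigr => p _; rewrite mulrCA !mulrA.
Qed.

End PairingMaps.

Section PairingEq.
Variables (K : fieldType) (T : eqType).
Implicit Types (F G : T -> K) (v w : lin K T).

Lemma pairing_coef F v (S : seq T) : uniq S -> {subset map snd v <= S} ->
  pairing F v = \sum_(a <- S) coef v a * F a.
Proof.
move=> uS; elim: v => [|p v IH] vS.
  by rewrite /pairing big_nil big1 // => a _; rewrite /coef big_nil mul0r.
have pS : p.2 \in S by apply: vS; rewrite inE eqxx.
rewrite pairing_cons IH => [|x xv]; last by apply: vS; rewrite inE xv orbT.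
rewrite [RHS](eq_bigr (fun a => (p.2 == a)%:R * p.1 * F a + coef v a * F a)); last first.
  by move=> a _; rewrite /coef big_cons; case: eqP; rewrite ?mul1r ?mul0r ?add0r ?mulrDl.
rewrite big_split; congr (_ + _).
rewrite (bigD1_seq p.2) //= eqxx mul1r big1 ?addr0 // => a.
by rewrite eq_sym => /negbTE ->; rewrite !mul0r.
Qed.

Lemma veqP v w : veq v w <-> forall F, pairing F v = pairing F w.
Proof.
split=> [vw F | vw u].
  set S := undup (map snd (v ++ w)); have uS : uniq S := undup_uniq _.
  have vS : {subset map snd v <= S} by move=> x xv; rewrite mem_undup map_cat mem_cat xv.
  have wS : {subset map snd w <= S}.
    by move=> x xw; rewrite mem_undup map_cat mem_cat xw orbT.
  by rewrite (pairing_coef F uS vS) (pairing_coef F uS wS); apply: eq_bigr => a _; rewrite vw.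
have coefE z : coef z u = pairing (fun x => (x == u)%:R) z.
  rewrite /coef /pairing big_mkcond; apply: eq_bigr => p _.
  by case: (p.2 == u); rewrite ?mulr1 ?mulr0.
by rewrite !coefE vw.
Qed.

Lemma eq_pairing_supp F G v :
  (forall u, coef v u != 0 -> F u = G u) -> pairing F v = pairing G v.
Proof.
have uS := undup_uniq (map snd v); have vS : {subset map snd v <= undup (map snd v)}.
  by move=> x; rewrite mem_undup.
move=> FG; rewrite !(pairing_coef _ uS vS); apply: eq_bigr => a _.
by have [->|/FG ->] := eqVneq (coef v a) 0; rewrite ?mul0r.
Qed.

End PairingEq.

Lemma veq_bilin (K : fieldType) (A B C : eqType) (f : A -> B -> lin K C)
    (v v' : lin K A) (w w' : lin K B) :
  veq v v' -> veq w w' -> veq (bilin f v w) (bilin f v' w').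
Proof.
move=> /veqP vv' /veqP ww'; apply/veqP => F; rewrite !pairing_bilin vv'.
by apply: eq_pairing => a; apply: ww'.
Qed.

Section TreeVectors.
Variable K : fieldType.
Implicit Types (F G : tree * tree -> K) (v w : lin K tree).

Lemma pairing_tens F v w :
  pairing F (tens v w) = pairing (fun a => pairing (fun b => F (a, b)) w) v.
Proof.
rewrite /tens /pairing big_allpairs_dep; apply: eq_bigr => p _.
by rewrite mulr_sumr; apply: eq_bigr => q _; rewrite mulrA.
Qed.

Lemma tens_nil v : tens v [::] = [::].
Proof. by elim: v. Qed.

Lemma pairing_lone F v : pairing F (lone v) = pairing (fun b => F (leaf, b)) v.
Proof. exact: pairing_map. Qed.

Lemma pairing_rone F v : pairing F (rone v) = pairing (fun a => F (a, leaf)) v.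
Proof. exact: pairing_map. Qed.

Lemma pairing_Dext (D : tree -> lin K (tree * tree)) F v :
  pairing F (Dext D v) = pairing (fun a => pairing F (D a)) v.
Proof. by rewrite /Dext pairing_flatten big_map; apply: eq_bigr => p _; rewrite pairing_lscale. Qed.

Lemma pairing_Dtilde (D : tree -> lin K (tree * tree)) F v :
  pairing F (Dtilde D v) = pairing F (Dext D v) - pairing F (lone v) - pairing F (rone v).
Proof. by rewrite /Dtilde !pairing_lsub. Qed.

Lemma Dext_split (D : tree -> lin K (tree * tree)) v :
  veq (Dext D v) (lone v ++ rone v ++ Dtilde D v).
Proof. by apply/veqP => F; rewrite !pairing_cat !pairing_lscale; ring. Qed.

Lemma Dext1 (D : tree -> lin K (tree * tree)) x : veq (Dext D [:: (1, x)]) (D x).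
Proof. by apply/veqP => F; rewrite pairing_Dext pairing1. Qed.

Lemma leafE x : is_leaf x -> x = leaf.
Proof. by case: x => [[]]. Qed.

Definition leaf_free v := all (fun p => ~~ is_leaf p.2) v.

Lemma eq_pairing_leaf_free (f g : tree -> K) v :
  leaf_free v -> (forall x, ~~ is_leaf x -> f x = g x) -> pairing f v = pairing g v.
Proof. exact: eq_in_pairing. Qed.

Lemma eq_pairing_inAplus (f g : tree -> K) v : inAplus v ->
  (forall x, valid x -> ~~ is_leaf x -> f x = g x) -> pairing f v = pairing g v.
Proof. by move=> Av fg; apply: (eq_in_pairing Av) => x /andP[]; apply: fg. Qed.

Lemma leaf_free_graft L v R : leaf_free (graft L v R).
Proof. by elim: v => //= p v ->; case: L. Qed.

Lemma leaf_free_tri n x y :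
  [/\ leaf_free (tri K n x y).1.1, leaf_free (tri K n x y).1.2 & leaf_free (tri K n x y).2].
Proof.
case: n => [|n] //=; case: x => [[|x0 xs]] //; case: y => [[|y0 ys]] //=.
by rewrite !leaf_free_graft.
Qed.

Lemma leaf_free_tprec x y : leaf_free (tprec K x y).
Proof. by case: (leaf_free_tri (Defs.tsize x + Defs.tsize y) x y). Qed.

Lemma leaf_free_tdot x y : leaf_free (tdot K x y).
Proof. by case: (leaf_free_tri (Defs.tsize x + Defs.tsize y) x y). Qed.

Lemma leaf_free_tsucc x y : leaf_free (tsucc K x y).
Proof. by case: (leaf_free_tri (Defs.tsize x + Defs.tsize y) x y). Qed.

Lemma leaf_free_tstar a c : ~~ (is_leaf a && is_leaf c) -> leaf_free (tstar K a c).
Proof.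
rewrite /tstar; case: ifP => [_ /= -> //|la]; case: ifP => [_ |_ _]; first by rewrite /= la.
rewrite /leaf_free !all_cat; apply/and3P.
by split; [apply: leaf_free_tprec | apply: leaf_free_tdot | apply: leaf_free_tsucc].
Qed.

Lemma leaf_free_aprec b d : ~~ (is_leaf b && is_leaf d) -> leaf_free (aprec K b d).
Proof.
by rewrite /aprec; case: ifP => ld; case: ifP => lb //= _; rewrite ?lb ?leaf_free_tprec.
Qed.

Lemma leaf_free_adot b d : leaf_free (adot K b d).
Proof. by rewrite /adot; case: ifP => // _; apply: leaf_free_tdot. Qed.

Lemma leaf_free_asucc b d : ~~ (is_leaf b && is_leaf d) -> leaf_free (asucc K b d).
Proof.
by rewrite /asucc; case: ifP => lb; case: ifP => ld //= _; rewrite ?ld ?leaf_free_tsucc.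
Qed.

Lemma aprec_tprec b d : ~~ is_leaf b -> ~~ is_leaf d -> aprec K b d = tprec K b d.
Proof. by rewrite /aprec => /negbTE -> /negbTE ->. Qed.

Lemma adot_tdot b d : ~~ is_leaf b -> ~~ is_leaf d -> adot K b d = tdot K b d.
Proof. by rewrite /adot => /negbTE -> /negbTE ->. Qed.

Lemma asucc_tsucc b d : ~~ is_leaf b -> ~~ is_leaf d -> asucc K b d = tsucc K b d.
Proof. by rewrite /asucc => /negbTE -> /negbTE ->. Qed.

Lemma tstar_leafl c : tstar K leaf c = [:: (1, c)].
Proof. by []. Qed.

Lemma tstar_leafr a : tstar K a leaf = [:: (1, a)].
Proof. by rewrite /tstar; case: ifP => // /leafE ->. Qed.

End TreeVectors.

Section TreeShapes.
Variable K : fieldType.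

Lemma tsize_gt0 x : (0 < Defs.tsize x)%N.
Proof. by case: x. Qed.

Lemma tsize_nonleaf x : ~~ is_leaf x -> (1 < Defs.tsize x)%N.
Proof. by case: x => [[|c cs]] //= _; rewrite ltnS addn_gt0 tsize_gt0. Qed.

Lemma tri_tsize x y :
  tri K (Defs.tsize x + Defs.tsize y) x y = tri K (Defs.tsize x + Defs.tsize y).-1.+1 x y.
Proof. by case: x. Qed.

Lemma tprec_Y x : ~~ is_leaf x -> tprec K Ytree x = [:: (1, Node [:: leaf; x])].
Proof. by rewrite /tprec tri_tsize; case: x => [[]]. Qed.

Lemma tsucc_Y x : ~~ is_leaf x -> tsucc K x Ytree = [:: (1, Node [:: x; leaf])].
Proof. by rewrite /tsucc tri_tsize; case: x => [[]]. Qed.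

Lemma tprec_node_leaf x y : ~~ is_leaf y ->
  tprec K (Node [:: x; leaf]) y = [:: (1, Node [:: x; y])].
Proof. by rewrite /tprec tri_tsize; case: y => [[]]. Qed.

Lemma tdot_rcons x0 xs z :
  tdot K (Node (x0 :: xs)) (Node [:: leaf; z]) = [:: (1, Node (rcons (x0 :: xs) z))].
Proof.
rewrite /tdot tri_tsize /=.
have -> : (if is_leaf (last x0 xs) then [:: (1 : K, leaf)] else [:: (1, last x0 xs)])
          = [:: (1, last x0 xs)] by case: (last x0 xs) => [[]].
by rewrite /graft /= -cat_rcons -lastI cats1.
Qed.

End TreeShapes.

Definition nonunit (u : tree * tree) : bool := ~~ (is_leaf u.1 && is_leaf u.2).

Section UnitParts.
Variable K : fieldType.

Definition leaf_left (g : tree -> K) (u : tree * tree) : K :=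
  if is_leaf u.1 && ~~ is_leaf u.2 then g u.2 else 0.

Definition leaf_right (g : tree -> K) (u : tree * tree) : K :=
  if is_leaf u.2 && ~~ is_leaf u.1 then g u.1 else 0.

(* [pairing (leaf_left g) w] reads off the part of [w] in [| ⊗ A^+], so
   [has_unit_parts D x] says that the terms of [D x] with a factor [|] are
   exactly [| ⊗ x] and [x ⊗ |]. *)
Definition has_unit_parts (D : tree -> lin K (tree * tree)) (x : tree) : Prop :=
  (forall g, pairing (leaf_left g) (D x) = g x) /\
  (forall g, pairing (leaf_right g) (D x) = g x).

End UnitParts.

Section AugmentedProduct.
Variables (K : fieldType) (op top : tree -> tree -> lin K tree).
Hypothesis op_top : forall b d, ~~ is_leaf b -> ~~ is_leaf d -> op b d = top b d.
Hypothesis leaf_free_op : forall b d, ~~ (is_leaf b && is_leaf d) -> leaf_free (op b d).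
Hypothesis leaf_free_top : forall b d, leaf_free (top b d).

Lemma pairing_leaf_left_tens_op g u v : nonunit u -> nonunit v ->
  pairing (leaf_left g) (tens_op op u v)
  = leaf_left (fun d => leaf_left (fun b => pairing g (top b d)) u) v.
Proof.
case: u v => a b [c d]; rewrite /nonunit /tens_op /= => nu nv.
case: ifP => [/andP[_ ld] | nbd].
  rewrite (pairing_rone _ (op a c)) (eq_pairing _ (G := fun _ => 0)) ?pairing0 => [|x].
    by rewrite /leaf_left /= ld andbF.
  by rewrite /leaf_left /= andbF.
rewrite pairing_tens; have [/andP[la lc] | nac] := boolP (is_leaf a && is_leaf c).
  have nb : ~~ is_leaf b by move: nu; rewrite la.
  have nd : ~~ is_leaf d by move: nv; rewrite lc.
  rewrite (leafE la) (leafE lc) tstar_leafl pairing1 op_top // /leaf_left /= nb nd.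
  by apply: (eq_pairing_leaf_free (leaf_free_top b d)) => y /negbTE ->.
rewrite (eq_pairing_leaf_free (g := fun _ => 0) (leaf_free_tstar K nac)) => [|x nx].
  rewrite pairing0 /leaf_left /=; move: nac.
  by case: (is_leaf a); case: (is_leaf c); rewrite //= if_same.
rewrite -(pairing0 (op b d)); apply: eq_pairing => y.
by rewrite /leaf_left /= (negbTE nx).
Qed.

Lemma pairing_leaf_right_tens_op g u v : nonunit u -> nonunit v ->
  pairing (leaf_right g) (tens_op op u v)
  = leaf_right (fun c => leaf_right (fun a => pairing g (top a c)) u) v.
Proof.
case: u v => a b [c d]; rewrite /nonunit /tens_op /= => nu nv.
case: ifP => [/andP[lb ld] | nbd].
  have na : ~~ is_leaf a by move: nu; rewrite lb andbT.
  have nc : ~~ is_leaf c by move: nv; rewrite ld andbT.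
  rewrite (pairing_rone _ (op a c)) op_top // /leaf_right /= lb ld na nc.
  by apply: (eq_pairing_leaf_free (leaf_free_top a c)) => x /negbTE ->.
rewrite pairing_tens (eq_pairing _ (G := fun _ => 0)) ?pairing0 => [|x].
  rewrite /leaf_right /=; move: nbd.
  by case: (is_leaf a); case: (is_leaf b); case: (is_leaf c); case: (is_leaf d).
rewrite -(pairing0 (op b d)); apply: eq_pairing_leaf_free => [|y /negbTE ny].
  by rewrite leaf_free_op ?nbd.
by rewrite /leaf_right /= ny.
Qed.

Variable D : tree -> lin K (tree * tree).
Hypothesis D_nonunit :
  forall {y}, valid y -> ~~ is_leaf y -> forall u, coef (D y) u != 0 -> nonunit u.
Hypothesis D_morph : forall {v w}, inAplus v -> inAplus w ->
  veq (Dext D (bilin top v w)) (bilin (tens_op op) (Dext D v) (Dext D w)).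

Lemma Dext_top y z : valid y -> ~~ is_leaf y -> valid z -> ~~ is_leaf z ->
  veq (Dext D (top y z)) (bilin (tens_op op) (D y) (D z)).
Proof.
move=> vy ny vz nz.
have inA x : valid x -> ~~ is_leaf x -> inAplus [:: (1 : K, x)].
  by move=> vx nx; rewrite /inAplus /= vx nx.
have top1 : veq (Dext D (top y z)) (Dext D (bilin top [:: (1, y)] [:: (1, z)])).
  by apply/veqP => F; rewrite !pairing_Dext pairing_bilin !pairing1.
move=> u; rewrite top1 (D_morph (inA _ vy ny) (inA _ vz nz)).
exact: veq_bilin (Dext1 D y) (Dext1 D z) u.
Qed.

Lemma has_unit_parts_top y z x : valid y -> ~~ is_leaf y -> valid z -> ~~ is_leaf z ->
  top y z = [:: (1, x)] -> has_unit_parts D y -> has_unit_parts D z -> has_unit_parts D x.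
Proof.
move=> vy ny vz nz yz [Ly Ry] [Lz Rz].
have /veqP Dyz := Dext_top vy ny vz nz; rewrite yz in Dyz.
have Dx F : pairing F (D x) = pairing F (bilin (tens_op op) (D y) (D z)).
  by rewrite -Dyz pairing_Dext pairing1.
have gx g : g x = pairing g (top y z) by rewrite yz pairing1.
split=> g; rewrite Dx pairing_bilin gx.
- rewrite -(Ly (fun b => pairing g (top b z))).
  apply: eq_pairing_supp => u /(D_nonunit vy ny) nu.
  rewrite -(Lz (fun d => leaf_left (fun b => pairing g (top b d)) u)).
  by apply: eq_pairing_supp => v /(D_nonunit vz nz) nv; apply: pairing_leaf_left_tens_op.
- rewrite -(Ry (fun a => pairing g (top a z))).
  apply: eq_pairing_supp => u /(D_nonunit vy ny) nu.
  rewrite -(Rz (fun c => leaf_right (fun a => pairing g (top a c)) u)).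
  by apply: eq_pairing_supp => v /(D_nonunit vz nz) nv; apply: pairing_leaf_right_tens_op.
Qed.

Lemma tens_op_lone t s : inAplus t -> inAplus s ->
  veq (bilin (tens_op op) (lone t) (lone s)) (lone (bilin top t s)).
Proof.
move=> ht hs; apply/veqP => G; rewrite pairing_bilin !pairing_lone pairing_bilin.
apply: (eq_pairing_inAplus ht) => a _ na; rewrite pairing_lone.
apply: (eq_pairing_inAplus hs) => b _ nb.
by rewrite /tens_op /= (negbTE na) tstar_leafl pairing_tens pairing1 op_top.
Qed.

Lemma tens_op_rone t s : inAplus t -> inAplus s ->
  veq (bilin (tens_op op) (rone t) (rone s)) (rone (bilin top t s)).
Proof.
move=> ht hs; apply/veqP => G; rewrite pairing_bilin !pairing_rone pairing_bilin.
apply: (eq_pairing_inAplus ht) => a _ na; rewrite pairing_rone.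
apply: (eq_pairing_inAplus hs) => b _ nb.
by rewrite /tens_op /= (pairing_rone _ (op a b)) op_top.
Qed.

Lemma pairing_Dtilde_top t s G : inAplus t -> inAplus s ->
  pairing G (Dtilde D (bilin top t s)) =
    pairing G (bilin (tens_op op) (Dtilde D t) (Dtilde D s))
  + pairing G (bilin (tens_op op) (lone t) (Dtilde D s))
  + pairing G (bilin (tens_op op) (Dtilde D t) (lone s))
  + pairing G (bilin (tens_op op) (lone t) (rone s))
  + pairing G (bilin (tens_op op) (rone t) (lone s))
  + pairing G (bilin (tens_op op) (rone t) (Dtilde D s))
  + pairing G (bilin (tens_op op) (Dtilde D t) (rone s)).
Proof.
move=> ht hs; move/veqP: (tens_op_lone ht hs) => /(_ G) LL.
move/veqP: (tens_op_rone ht hs) => /(_ G) RR.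
move/veqP: (D_morph ht hs) => /(_ G) Dts.
move/veqP: (veq_bilin (tens_op op) (Dext_split D t) (Dext_split D s)) => /(_ G) Dsplit.
rewrite pairing_Dtilde Dts Dsplit !pairing_bilin_catl !pairing_bilin_catr -LL -RR; ring.
Qed.

End AugmentedProduct.

Section Coproduct.
Variables (K : fieldType) (D : tree -> lin K (tree * tree)).
Hypothesis HD : is_Delta D.

Lemma Delta_nonunit y : valid y -> ~~ is_leaf y -> forall u, coef (D y) u != 0 -> nonunit u.
Proof. by case: HD => _ _ supp _ vy ny [a b] /(supp _ vy ny) /and3P[]. Qed.

Lemma Delta_prec v w : inAplus v -> inAplus w ->
  veq (Dext D (vprec v w)) (TTprec (Dext D v) (Dext D w)).
Proof. by move=> Av Aw; case: HD => _ _ _ /(_ v w Av Aw) []. Qed.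

Lemma Delta_dot v w : inAplus v -> inAplus w ->
  veq (Dext D (vdot v w)) (TTdot (Dext D v) (Dext D w)).
Proof. by move=> Av Aw; case: HD => _ _ _ /(_ v w Av Aw) []. Qed.

Lemma Delta_succ v w : inAplus v -> inAplus w ->
  veq (Dext D (vsucc v w)) (TTsucc (Dext D v) (Dext D w)).
Proof. by move=> Av Aw; case: HD => _ _ _ /(_ v w Av Aw) []. Qed.

Lemma has_unit_parts_Y : has_unit_parts D Ytree.
Proof.
case: HD => _ /veqP DY _ _; split=> g; rewrite DY pairing_cons pairing1 mul1r.
  by rewrite /leaf_left /= add0r.
by rewrite /leaf_right /= addr0.
Qed.

Lemma has_unit_parts_tree x : valid x -> ~~ is_leaf x -> has_unit_parts D x.
Proof.
have prec := has_unit_parts_top (aprec_tprec K) (leaf_free_aprec K) (leaf_free_tprec K)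
  Delta_nonunit Delta_prec.
have succ := has_unit_parts_top (asucc_tsucc K) (leaf_free_asucc K) (leaf_free_tsucc K)
  Delta_nonunit Delta_succ.
have dot := has_unit_parts_top (adot_tdot K) (fun b d _ => leaf_free_adot K b d)
  (leaf_free_tdot K) Delta_nonunit Delta_dot.
have [n] := ubnP (Defs.tsize x); elim: n x => // n IH [[|x0 [|x1 xs]]] //.
rewrite ltnS /= => size_x /andP[v0 /andP[v1 vs]] _.
have [p0 p1] := (tsize_gt0 x0, tsize_gt0 x1).
(* | ∨ x = Y ≺ x,  x ∨ | = x ≻ Y,  x ∨ y = (x ∨ |) ≺ y,
   x0 ∨ ... ∨ xk ∨ z = (x0 ∨ ... ∨ xk) · (| ∨ z). *)
case: xs size_x vs => [|x2 xs] size_x vs.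
  rewrite /= addn0 in size_x.
  have [l0|n0] := boolP (is_leaf x0); have [l1|n1] := boolP (is_leaf x1).
  - by rewrite (leafE l0) (leafE l1); apply: has_unit_parts_Y.
  - rewrite (leafE l0); apply: (prec Ytree x1) => //; rewrite ?tprec_Y //.
      exact: has_unit_parts_Y.
    by apply: IH => //; lia.
  - rewrite (leafE l1); apply: (succ x0 Ytree) => //; rewrite ?tsucc_Y //.
      by apply: IH => //; lia.
    exact: has_unit_parts_Y.
  - have s1 := tsize_nonleaf n1.
    apply: (prec (Node [:: x0; leaf]) x1) => //=; rewrite ?v0 ?tprec_node_leaf //.
      by apply: IH => //=; rewrite ?v0 //; lia.
    by apply: IH => //; lia.
move: size_x vs; rewrite (lastI x2 xs); move: (belast x2 xs) (last x2 xs) => s z.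
rewrite all_rcons map_rcons sumn_rcons => size_x /andP[vz vs].
have pz := tsize_gt0 z.
apply: (dot (Node [:: x0, x1 & s]) (Node [:: leaf; z])) => //=.
all: rewrite ?v0 ?v1 ?vs ?vz ?tdot_rcons //.
  by apply: IH => //=; rewrite ?v0 ?v1 ?vs //; lia.
by apply: IH => //=; rewrite ?vz //; lia.
Qed.

Definition restrict_plus (F : tree * tree -> K) (u : tree * tree) : K :=
  if is_leaf u.1 || is_leaf u.2 then 0 else F u.

Lemma pairing_Dtilde_restrict t F :
  inAplus t -> pairing F (Dtilde D t) = pairing (restrict_plus F) (Dtilde D t).
Proof.
have Dt G : pairing G (Dtilde D t)
            = pairing (fun a => pairing G (D a) - G (leaf, a) - G (a, leaf)) t.
  by rewrite pairing_Dtilde pairing_Dext pairing_lone pairing_rone !pairingB.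
move=> At; rewrite !Dt; apply: (eq_pairing_inAplus At) => a va na.
have [L R] := has_unit_parts_tree va na.
have DaF : pairing F (D a) = pairing (restrict_plus F) (D a) + F (leaf, a) + F (a, leaf).
  rewrite -(L (fun b => F (leaf, b))) -(R (fun b => F (b, leaf))) -!pairingD.
  apply: eq_pairing_supp => -[x y] /(Delta_nonunit va na).
  rewrite /nonunit /restrict_plus /leaf_left /leaf_right /=.
  by case lx: (is_leaf x); case ly: (is_leaf y); rewrite ?(leafE lx) ?(leafE ly) ?addr0 ?add0r.
by rewrite DaF /restrict_plus /= orbT !subr0; ring.
Qed.

Section CrossTerms.
Variables (t s : lin K tree) (G : tree * tree -> K).
Hypotheses (At : inAplus t) (As : inAplus s).

Lemma cross_lone_rone0 op : (forall a, ~~ is_leaf a -> op a leaf = [::]) ->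
  pairing G (bilin (tens_op op) (lone t) (rone s)) = 0.
Proof.
move=> op0; rewrite pairing_bilin pairing_lone -(pairing0 t).
apply: (eq_pairing_inAplus At) => a _ na; rewrite pairing_rone -(pairing0 s).
apply: (eq_pairing_inAplus As) => b _ nb.
by rewrite /tens_op /= (negbTE na) op0 // tens_nil pairing_nil.
Qed.

Lemma cross_rone_lone0 op : (forall b, ~~ is_leaf b -> op leaf b = [::]) ->
  pairing G (bilin (tens_op op) (rone t) (lone s)) = 0.
Proof.
move=> op0; rewrite pairing_bilin pairing_rone -(pairing0 t).
apply: (eq_pairing_inAplus At) => a _ na; rewrite pairing_lone -(pairing0 s).
apply: (eq_pairing_inAplus As) => b _ nb.
by rewrite /tens_op /= (negbTE nb) op0 // tens_nil pairing_nil.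
Qed.

Lemma cross_rone_Dtilde0 op : (forall b, ~~ is_leaf b -> op leaf b = [::]) ->
  pairing G (bilin (tens_op op) (rone t) (Dtilde D s)) = 0.
Proof.
move=> op0; rewrite pairing_bilin pairing_rone -(pairing0 t).
apply: (eq_pairing_inAplus At) => a _ na; rewrite (pairing_Dtilde_restrict _ As).
rewrite -(pairing0 (Dtilde D s)); apply: eq_pairing => -[c d].
rewrite /restrict_plus /=; case: ifP => // /norP[_ nd].
by rewrite /tens_op /= (negbTE nd) op0 // tens_nil pairing_nil.
Qed.

Lemma cross_Dtilde_rone0 op : (forall a, ~~ is_leaf a -> op a leaf = [::]) ->
  pairing G (bilin (tens_op op) (Dtilde D t) (rone s)) = 0.
Proof.
move=> op0; rewrite pairing_bilin (pairing_Dtilde_restrict _ At).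
rewrite -(pairing0 (Dtilde D t)); apply: eq_pairing => -[a c].
rewrite /restrict_plus /=; case: ifP => // /norP[_ nc].
rewrite pairing_rone -(pairing0 s); apply: eq_pairing => b.
by rewrite /tens_op /= andbT (negbTE nc) op0 // tens_nil pairing_nil.
Qed.

Lemma cross_aprec_lone_rone :
  pairing G (bilin (tens_op (aprec K)) (lone t) (rone s)) = pairing G (tens s t).
Proof.
rewrite pairing_bilin pairing_lone pairing_tens [RHS]pairing_swap.
apply: (eq_pairing_inAplus At) => a _ na; rewrite pairing_rone.
apply: (eq_pairing_inAplus As) => b _ nb.
by rewrite /tens_op /= (negbTE na) /aprec /= (negbTE na) tstar_leafl pairing_tens !pairing1.
Qed.

Lemma cross_asucc_rone_lone :
  pairing G (bilin (tens_op (asucc K)) (rone t) (lone s)) = pairing G (tens t s).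
Proof.
rewrite pairing_bilin pairing_rone pairing_tens.
apply: (eq_pairing_inAplus At) => a _ na; rewrite pairing_lone.
apply: (eq_pairing_inAplus As) => b _ nb.
by rewrite /tens_op /= (negbTE nb) /asucc /= (negbTE nb) tstar_leafr pairing_tens !pairing1.
Qed.

Lemma cross_asucc_rone_Dtilde :
  pairing G (bilin (tens_op (asucc K)) (rone t) (Dtilde D s))
  = pairing G (TTstar (rone t) (Dtilde D s)).
Proof.
rewrite !pairing_bilin !pairing_rone; apply: eq_pairing => a.
rewrite (pairing_Dtilde_restrict _ As) [RHS](pairing_Dtilde_restrict _ As).
apply: eq_pairing => -[c d]; rewrite /restrict_plus /=; case: ifP => // /norP[_ nd].
by rewrite /tens_op /= (negbTE nd) /asucc /= (negbTE nd) tstar_leafl.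
Qed.

Lemma cross_aprec_Dtilde_rone :
  pairing G (bilin (tens_op (aprec K)) (Dtilde D t) (rone s))
  = pairing G (TTstar (Dtilde D t) (rone s)).
Proof.
rewrite !pairing_bilin (pairing_Dtilde_restrict _ At) [RHS](pairing_Dtilde_restrict _ At).
apply: eq_pairing => -[a c]; rewrite /restrict_plus /=; case: ifP => // /norP[_ nc].
rewrite !pairing_rone; apply: eq_pairing => b.
by rewrite /tens_op /= andbT (negbTE nc) /aprec /= (negbTE nc) tstar_leafr.
Qed.

End CrossTerms.

End Coproduct.

Theorem mainTheorem5 (K : fieldType) (D : tree -> lin K (tree * tree)) :
  is_Delta D ->
  forall t s : lin K tree, inAplus t -> inAplus s ->
  [/\ veq (Dtilde D (vdot t s))
          (TTdot (Dtilde D t) (Dtilde D s) ++ TTdot (lone t) (Dtilde D s)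
           ++ TTdot (Dtilde D t) (lone s)),
      veq (Dtilde D (vprec t s))
          (tens s t ++ TTprec (lone t) (Dtilde D s) ++ TTprec (Dtilde D t) (lone s)
           ++ TTstar (Dtilde D t) (rone s) ++ TTprec (Dtilde D t) (Dtilde D s)) &
      veq (Dtilde D (vsucc t s))
          (tens t s ++ TTsucc (lone t) (Dtilde D s) ++ TTstar (rone t) (Dtilde D s)
           ++ TTsucc (Dtilde D t) (lone s) ++ TTsucc (Dtilde D t) (Dtilde D s))].
Proof.
move=> HD t s At As; split; apply/veqP => G.
- rewrite (pairing_Dtilde_top (adot_tdot K) (Delta_dot HD)) // !pairing_cat.
  rewrite cross_lone_rone0 ?cross_rone_lone0 ?cross_rone_Dtilde0 ?cross_Dtilde_rone0 //;
    try by move=> a _; rewrite /adot ?orbT.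
  rewrite /TTdot; ring.
- rewrite (pairing_Dtilde_top (aprec_tprec K) (Delta_prec HD)) // !pairing_cat.
  rewrite cross_aprec_lone_rone ?cross_aprec_Dtilde_rone
    ?cross_rone_lone0 ?cross_rone_Dtilde0 //;
    try by move=> b /negbTE nb; rewrite /aprec nb.
  rewrite /TTprec; ring.
- rewrite (pairing_Dtilde_top (asucc_tsucc K) (Delta_succ HD)) // !pairing_cat.
  rewrite cross_asucc_rone_lone ?cross_asucc_rone_Dtilde
    ?cross_lone_rone0 ?cross_Dtilde_rone0 //;
    try by move=> a /negbTE na; rewrite /asucc na.
  rewrite /TTsucc; ring.
Qed.
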